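(* Let $T$ be a bounded linear operator on a complex Hilbert space, and suppose $T^k$ is quasiposinormal and $T^\ell$ is coquasiposinormal for some positive integers $k,\ell$. Then $T^m$ is both quasiposinormal and coquasiposinormal for every integer $m\ge m_0$, where $m_0=\operatorname{lcm}(k,\ell)$. Moreover: (a) if $\operatorname{dsc}(T)=1$, then $T$ is quasiposinormal; (b) if $\operatorname{asc}(T)=1$, then $T$ is coquasiposinormal.
   Context: $\mathcal{N}(A)$ and $\mathcal{R}(A)$ denote kernel and range. $A$ is quasiposinormal if $\mathcal{N}(A)\subseteq\mathcal{N}(A^* )$, and coquasiposinormal if $\mathcal{N}(A^* )\subseteq\mathcal{N}(A)$. The ascent $\operatorname{asc}(A)$ is the least integer $m\ge0$ with $\mathcal{N}(A^m)=\mathcal{N}(A^{m+1})$, and the descent $\operatorname{dsc}(A)$ is the least integer $m\ge0$ with $\mathcal{R}(A^{m+1})=\mathcal{R}(A^m)$ (when such integers exist). *)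

From HB Require Import structures.
From mathcomp Require Import all_boot all_order all_algebra.
From mathcomp Require Import reals complex.
From mathcomp Require Import classical_sets.
Set Implicit Arguments. Unset Strict Implicit. Unset Printing Implicit Defensive.
Import Order.TTheory GRing.Theory Num.Theory.
Local Open Scope ring_scope.
Local Open Scope complex_scope.
Local Open Scope classical_set_scope.

Section HilbertDefs.
Variables (R : realType) (V : lmodType R[i]).
Variable ip : V -> V -> R[i].

Definition is_inner_product : Prop :=
  [/\ forall (a : R[i]) (x y z : V), ip (a *: x + y) z = a * ip x z + ip y z,
      forall x y : V, ip y x = (ip x y)^*,
      forall x : V, 0 <= ip x x
    & forall x : V, ip x x = 0 -> x = 0].

(* completeness for the induced norm ||x||^2 = ip x x *)
Definition ip_complete : Prop :=
  forall u : nat -> V,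
    (forall eps : R, 0 < eps -> exists N : nat, forall m n : nat,
        (N <= m)%N -> (N <= n)%N -> ip (u m - u n) (u m - u n) < (eps ^+ 2)%:C) ->
    exists x : V, forall eps : R, 0 < eps -> exists N : nat, forall n : nat,
        (N <= n)%N -> ip (u n - x) (u n - x) < (eps ^+ 2)%:C.

Definition hilbert_space : Prop := is_inner_product /\ ip_complete.

Definition bounded_linear (T : V -> V) : Prop :=
  (forall (a : R[i]) (x y : V), T (a *: x + y) = a *: T x + T y) /\
  exists C : R, forall x : V, ip (T x) (T x) <= C%:C * ip x x.

Definition is_adjoint (A B : V -> V) : Prop :=
  forall x y : V, ip (A x) y = ip x (B y).

Definition kernel (A : V -> V) : set V := [set x | A x = 0].
Definition range (A : V -> V) : set V := [set y | exists x, A x = y].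

Definition opow (T : V -> V) (m : nat) : V -> V := iter m T.

Definition quasiposinormal (A : V -> V) : Prop :=
  forall B, is_adjoint A B -> kernel A `<=` kernel B.
Definition coquasiposinormal (A : V -> V) : Prop :=
  forall B, is_adjoint A B -> kernel B `<=` kernel A.

Definition ascent_is (T : V -> V) (m : nat) : Prop :=
  kernel (opow T m) = kernel (opow T m.+1) /\
  forall j : nat, (j < m)%N -> kernel (opow T j) <> kernel (opow T j.+1).

Definition descent_is (T : V -> V) (m : nat) : Prop :=
  range (opow T m.+1) = range (opow T m) /\
  forall j : nat, (j < m)%N -> range (opow T j.+1) <> range (opow T j).

End HilbertDefs.

From Pilot Require Import Defs.
From HB Require Import structures.
From mathcomp Require Import all_boot all_order all_algebra.
From mathcomp Require Import reals complex.
From mathcomp Require Import boolp classical_sets.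
From mathcomp Require Import archimedean ring lra.
Set Implicit Arguments. Unset Strict Implicit. Unset Printing Implicit Defensive.
Import Order.TTheory GRing.Theory Num.Theory.
Local Open Scope ring_scope.
Local Open Scope complex_scope.
Local Open Scope classical_set_scope.

(* The bounded operator T has an adjoint S by the Riesz representation theorem,
   proved by minimising ||x||^2 - 2 Re f(x) over the Hilbert space.
   If N(A) ⊆ N(A* ) then N(A^2) = N(A): A (A v) = 0 gives ||A v||^2 = (v, A* A v) = 0.
   For A = T^k this makes N(T^m) = N(T^k) for all m >= k, so
   N(T^m) = N(T^k) ⊆ N(S^k) ⊆ N(S^m); symmetrically N(S^m) ⊆ N(T^m) for m >= l.
   Only m >= max(k, l) is used, which lcm(k, l) <= m implies.
   If dsc(T) = 1, every T y is some T^k v, so (T y, x) = (v, S^k x) = 0 for x in N(T).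
   If asc(T) = 1, then N(S) ⊆ N(S^l) ⊆ N(T^l) = N(T). *)

Section InnerProduct.
Variables (R : realType) (V : lmodType R[i]) (ip : V -> V -> R[i]).
Hypothesis hip : is_inner_product ip.

Lemma ipl_semilinear z : semilinear_for *%R (ip^~ z).
Proof. by apply: GRing.semilinear_linear => a x y; case: hip => ->. Qed.

Lemma ip0l z : ip 0 z = 0.
Proof. exact: (nmod_morphism_semilinear (ipl_semilinear z)).1. Qed.

Lemma ipDl x y z : ip (x + y) z = ip x z + ip y z.
Proof. exact: (ipl_semilinear z).2. Qed.

Lemma ipZl a x z : ip (a *: x) z = a * ip x z.
Proof. exact: (ipl_semilinear z).1. Qed.

Lemma ipC x y : ip y x = (ip x y)^*.
Proof. by case: hip. Qed.

Lemma ip0r z : ip z 0 = 0.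
Proof. by rewrite ipC ip0l conjc0. Qed.

Lemma ipDr x y z : ip z (x + y) = ip z x + ip z y.
Proof. by rewrite ipC ipDl rmorphD /= -!ipC. Qed.

Lemma ipZr a x z : ip z (a *: x) = a^* * ip z x.
Proof. by rewrite ipC ipZl rmorphM /= -ipC. Qed.

Lemma ipBr x y z : ip z (x - y) = ip z x - ip z y.
Proof. by rewrite ipDr -scaleN1r ipZr rmorphN1 mulN1r. Qed.

Lemma ipr_inj u v : (forall y, ip y u = ip y v) -> u = v.
Proof.
move=> huv; apply/eqP; rewrite -subr_eq0; apply/eqP.
by case: hip => _ _ _; apply; rewrite ipBr huv subrr.
Qed.

Definition sqnorm x : R := complex.Re (ip x x).

Lemma ip_sqnorm x : ip x x = (sqnorm x)%:C.
Proof. by case: hip => _ _ ge0 _; rewrite /sqnorm RRe_real // ger0_real. Qed.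

Lemma sqnorm_ge0 x : 0 <= sqnorm x.
Proof. by case: hip => _ _ ge0 _; rewrite -lecR -ip_sqnorm. Qed.

Lemma sqnorm_eq0 x : sqnorm x = 0 -> x = 0.
Proof. by case: hip => _ _ _ def0 x0; apply: def0; rewrite ip_sqnorm x0. Qed.

Lemma sqnorm0 : sqnorm 0 = 0.
Proof. by rewrite /sqnorm ip0l. Qed.

Lemma sqnormDZ x w t : sqnorm (x + t *: w) = sqnorm x + 2 * complex.Re (t * ip w x)
  + (complex.Re t ^+ 2 + complex.Im t ^+ 2) * sqnorm w.
Proof.
rewrite /sqnorm ipDl !ipDr !ipZl !ipZr (ipC x w) (ip_sqnorm w) (ip_sqnorm x).
by case: t => t1 t2; case: (ip x w) => c1 c2; simpc; rewrite /=; ring.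
Qed.

Lemma sqnormDZr x w (r : R) :
  sqnorm (x + r%:C *: w) = sqnorm x + 2 * r * complex.Re (ip w x) + r ^+ 2 * sqnorm w.
Proof. by rewrite sqnormDZ; case: (ip w x) => c1 c2; simpc; rewrite /=; ring. Qed.

Lemma Re_ip_sqr_le x w : complex.Re (ip w x) ^+ 2 <= sqnorm x * sqnorm w.
Proof.
have [w0|w_neq0] := eqVneq (sqnorm w) 0.
  by rewrite w0 mulr0 (sqnorm_eq0 w0) ip0l expr0n.
have w_gt0 : 0 < sqnorm w by rewrite lt_def w_neq0 sqnorm_ge0.
set c := complex.Re (ip w x).
have := sqnorm_ge0 (x + (- c / sqnorm w)%:C *: w).
rewrite sqnormDZr -/c => h.
have e : (- c / sqnorm w) * sqnorm w = - c by rewrite mulfVK.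
have := sqnorm_ge0 x; nra.
Qed.

Lemma adjoint_sym A B : is_adjoint ip A B -> is_adjoint ip B A.
Proof. by move=> hAB x y; rewrite ipC -hAB -ipC. Qed.

Lemma adjoint_unique A B B' : is_adjoint ip A B -> is_adjoint ip A B' -> B =1 B'.
Proof. by move=> hB hB' y; apply: ipr_inj => x; rewrite -hB hB'. Qed.

End InnerProduct.

Lemma adjoint_iter (R : realType) (V : lmodType R[i]) (ip : V -> V -> R[i]) A B :
  is_adjoint ip A B -> forall j, is_adjoint ip (opow A j) (opow B j).
Proof. by rewrite /opow => hAB; elim=> [|j IH] x y //=; rewrite hAB IH -iterSr. Qed.

Lemma eventually_invSn_lt (R : realType) (e : R) : 0 < e ->
  exists N, forall n, (N <= n)%N -> n.+1%:R^-1 < e.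
Proof.
move=> e_gt0; exists (Num.bound e^-1) => n le_Nn.
rewrite -[e]invrK ltf_pV2 ?posrE ?invr_gt0 ?ltr0Sn //.
apply: lt_le_trans (archi_boundP (ltW _)) _; first by rewrite invr_gt0.
by rewrite ler_nat (leq_trans le_Nn).
Qed.

Section RieszRepresentation.
Variables (R : realType) (V : lmodType R[i]) (ip : V -> V -> R[i]).
Hypothesis hip : is_inner_product ip.
Variables (f : V -> R[i]) (K : R).
Hypotheses (f_scalar : scalar f) (K_ge0 : 0 <= K).
Hypothesis f_bounded : forall x, complex.Re (f x) ^+ 2 <= K * sqnorm ip x.

Let fD : {morph f : x y / x + y}.
Proof. exact: (GRing.semilinear_linear f_scalar).2. Qed.

Let fZ a x : f (a *: x) = a * f x.
Proof. exact: (GRing.semilinear_linear f_scalar).1. Qed.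

Let ReD (a b : R[i]) : complex.Re (a + b) = complex.Re a + complex.Re b.
Proof. by case: a; case: b. Qed.

Definition riesz_energy x := sqnorm ip x - 2 * complex.Re (f x).
Local Notation J := riesz_energy.

Lemma riesz_energy_ge x : - K <= J x.
Proof.
rewrite /J; have := f_bounded x; have := sqnorm_ge0 hip x.
set q := sqnorm ip x; set r := complex.Re (f x) => q_ge0 r_le.
have : `|2 * r| <= q + K.
  rewrite -ler_sqr ?nnegrE ?normr_ge0 ?addr_ge0 // real_normK ?num_real //.
  by have := sqr_ge0 (q - K); nra.
by move/(le_trans (ler_norm _)); lra.
Qed.

Lemma riesz_energy_shift z e :
  J (z + e) = J z + 2 * complex.Re (ip e z) + sqnorm ip e - 2 * complex.Re (f e).
Proof.
have -> : z + e = z + (1 : R)%:C *: e by rewrite rmorph1 scale1r.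
by rewrite /J sqnormDZr // fD fZ rmorph1 mul1r ReD; lra.
Qed.

(* The parallelogram law, in terms of the energy. *)
Lemma riesz_energy_midpoint a b :
  sqnorm ip (a - b) = 2 * J a + 2 * J b - 4 * J ((2^-1 : R)%:C *: (a + b)).
Proof.
rewrite /J fZ fD.
have -> : a - b = a + (-1 : R)%:C *: b by rewrite rmorphN1 scaleN1r.
have -> : (2^-1 : R)%:C *: (a + b) = 0 + (2^-1 : R)%:C *: (a + b) by rewrite add0r.
rewrite !sqnormDZr // ip0r // sqnorm0 //.
have -> : a + b = a + (1 : R)%:C *: b by rewrite rmorph1 scale1r.
rewrite sqnormDZr //.
by case: (f a) (f b) => [fa1 fa2] [fb1 fb2] /=; field.
Qed.

Lemma riesz_energy_min_rep z : (forall x, J z <= J x) -> forall w, f w = ip w z.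
Proof.
move=> z_min w.
have H t : 0 <= 2 * complex.Re (t * ip w z) - 2 * complex.Re (t * f w)
    + (complex.Re t ^+ 2 + complex.Im t ^+ 2) * sqnorm ip w.
  by have := z_min (z + t *: w); rewrite /J sqnormDZ // fD fZ ReD; lra.
have w_ge0 := sqnorm_ge0 hip w.
move: H; case: (ip w z) => p1 p2; case: (f w) => g1 g2 H.
pose s := (sqnorm ip w + 1)^-1.
have s_gt0 : 0 < s by rewrite /s invr_gt0; lra.
have sw : s * sqnorm ip w = 1 - s by rewrite /s; field; lra.
(* Minimality in the direction t = - s (p - g)^*, where p = ip w z and g = f w. *)
have := H ((- (s * (p1 - g1))) +i* (s * (p2 - g2))); rewrite /=.
set A := (p1 - g1) ^+ 2 + (p2 - g2) ^+ 2 => HA.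
have {HA} : 0 <= - (s * A) * (1 + s) + s * A * (s * sqnorm ip w - (1 - s)).
  by move: HA; rewrite /A; congr (_ <= _); ring.
rewrite sw subrr mulr0 addr0 => HA.
have A_le0 : A <= 0 by nra.
have e1 : p1 - g1 = 0 by have := sqr_ge0 (p2 - g2); rewrite /A in A_le0; nra.
have e2 : p2 - g2 = 0 by have := sqr_ge0 (p1 - g1); rewrite /A in A_le0; nra.
by congr (_ +i* _); apply/eqP; rewrite eq_sym -subr_eq0; apply/eqP.
Qed.

Lemma riesz_energy_le_lim (u : nat -> V) z (d : R) :
  (forall n, J (u n) < d + n.+1%:R^-1) ->
  (forall eps, 0 < eps -> exists N, forall n, (N <= n)%N -> sqnorm ip (u n - z) < eps ^+ 2) ->
  J z <= d.
Proof.
move=> u_min u_cvg; apply/ler_addgt0Pr => eta eta_gt0.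
pose M := sqnorm ip z + K + 1; pose del := eta / 8.
have z_ge0 := sqnorm_ge0 hip z.
have M_ge1 : 1 <= M by rewrite /M; move: K_ge0; lra.
have M_gt0 : 0 < M by lra.
have del_gt0 : 0 < del by rewrite /del; lra.
have [N1 hN1] := u_cvg (del / M) (divr_gt0 del_gt0 M_gt0).
have [|N2 hN2] := @eventually_invSn_lt _ (eta / 2); first lra.
pose n := maxn N1 N2; set e := u n - z.
have e_ge0 := sqnorm_ge0 hip e.
have e_small : sqnorm ip e < (del / M) ^+ 2 := hN1 n (leq_maxl _ _).
have small c : c ^+ 2 <= M * sqnorm ip e -> - del <= c <= del.
  move=> c_le; have : c ^+ 2 <= del ^+ 2.
    apply: (le_trans c_le); apply: le_trans (_ : M * (del / M) ^+ 2 <= _).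
      by rewrite ler_pM2l // ltW.
    have -> : M * (del / M) ^+ 2 = del ^+ 2 / M by field; rewrite gt_eqF.
    by rewrite ler_pdivrMr // ler_peMr ?sqr_ge0.
  by move=> c2; apply/andP; split; nra.
have /andP[ez_lo ez_hi] : - del <= complex.Re (ip e z) <= del.
  apply/small/(le_trans (Re_ip_sqr_le hip z e)).
  by rewrite ler_wpM2r // /M; move: K_ge0; lra.
have /andP[fe_lo fe_hi] : - del <= complex.Re (f e) <= del.
  apply/small/(le_trans (f_bounded e)).
  by rewrite ler_wpM2r // /M; lra.
have := riesz_energy_shift z e; have -> : z + e = u n by rewrite addrC subrK.
have := u_min n; have := hN2 n (leq_maxr _ _); rewrite /del in ez_lo fe_hi.
set x := (n.+1%:R^-1 : R); lra.
Qed.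

Lemma riesz_energy_has_min : ip_complete ip -> exists z, forall x, J z <= J x.
Proof.
move=> ip_cplt; pose E := [set J x | x in [set: V]].
have E_lb : has_lbound E by exists (- K) => _ [x _ <-]; exact: riesz_energy_ge.
have E_inf : has_inf E by split => //; exists (J 0), 0.
have inf_le x : inf E <= J x by apply: (ge_inf E_lb); exists x.
have near_inf n : exists x, J x < inf E + n.+1%:R^-1.
  have /inf_adherent : 0 < n.+1%:R^-1 :> R by rewrite invr_gt0.
  by case/(_ E E_inf) => _ [x _ <-]; exists x.
have [u u_min] := choice near_inf.
have u_cauchy n m : sqnorm ip (u n - u m) <= 2 * n.+1%:R^-1 + 2 * m.+1%:R^-1.
  rewrite riesz_energy_midpoint; have := inf_le ((2^-1 : R)%:C *: (u n + u m)).
  have := u_min n; have := u_min m.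
  set x := (n.+1%:R^-1 : R); set y := (m.+1%:R^-1 : R); lra.
have [|z u_cvg] := ip_cplt u.
  move=> eps eps_gt0; have [|N hN] := @eventually_invSn_lt _ (eps ^+ 2 / 4).
    by rewrite divr_gt0 // exprn_gt0.
  exists N => n m le_Nn le_Nm; rewrite ip_sqnorm // ltcR.
  apply: le_lt_trans (u_cauchy n m) _; have := hN _ le_Nn; have := hN _ le_Nm.
  set x := (n.+1%:R^-1 : R); set y := (m.+1%:R^-1 : R); lra.
exists z => x; apply: le_trans (inf_le x); apply: riesz_energy_le_lim u_min _.
move=> eps /u_cvg[N hN]; exists N => n /hN.
by rewrite ip_sqnorm // ltcR.
Qed.

End RieszRepresentation.

Theorem riesz_representation (R : realType) (V : lmodType R[i]) (ip : V -> V -> R[i])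
    (f : V -> R[i]) (K : R) :
  hilbert_space ip -> scalar f -> 0 <= K ->
  (forall x, complex.Re (f x) ^+ 2 <= K * sqnorm ip x) ->
  exists z, forall w, f w = ip w z.
Proof.
move=> [hip ip_cplt] f_scalar K_ge0 f_bounded.
have [z z_min] := riesz_energy_has_min hip f_scalar K_ge0 f_bounded ip_cplt.
by exists z; apply: riesz_energy_min_rep.
Qed.

Lemma bounded_linear_adjoint (R : realType) (V : lmodType R[i]) (ip : V -> V -> R[i])
    (T : V -> V) :
  hilbert_space ip -> bounded_linear ip T -> exists S, is_adjoint ip T S.
Proof.
move=> hV [T_linear [C T_bounded]]; have hip := hV.1.
pose C' := Num.max C 0.
have T_bounded' x : sqnorm ip (T x) <= C' * sqnorm ip x.
  have := T_bounded x; rewrite !ip_sqnorm // -rmorphM /= lecR => /le_trans; apply.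
  by rewrite ler_wpM2r ?sqnorm_ge0 // le_max lexx.
have adj y : exists z, forall x, ip (T x) y = ip x z.
  apply: (riesz_representation (K := sqnorm ip y * C')) => //.
  - by move=> a x x'; rewrite T_linear ipDl // ipZl.
  - by rewrite mulr_ge0 ?sqnorm_ge0 // le_max lexx orbT.
  - move=> x; apply: le_trans (Re_ip_sqr_le hip y (T x)) _.
    by rewrite -mulrA ler_wpM2l ?sqnorm_ge0.
by have [S hS] := choice adj; exists S.
Qed.

Section IteratedKernels.
Variables (U : Type) (F : U -> U) (u0 : U).
Hypothesis Fu0 : F u0 = u0.

Lemma iter_fixed j : iter j F u0 = u0.
Proof. by elim: j => //= j ->. Qed.

Lemma iter_ker_le k m x : (k <= m)%N -> iter k F x = u0 -> iter m F x = u0.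
Proof. by move=> le_km Fkx; rewrite -(subnK le_km) iterD Fkx iter_fixed. Qed.

Lemma iter_ker_stable k : (0 < k)%N ->
    (forall v, iter k F (iter k F v) = u0 -> iter k F v = u0) ->
  forall m x, (k <= m)%N -> iter m F x = u0 -> iter k F x = u0.
Proof.
move=> k_gt0 ker_sqr.
have step n x : (k <= n)%N -> iter n.+1 F x = u0 -> iter n F x = u0.
  move=> le_kn; rewrite -(subnK le_kn) addnC -addSn !iterD.
  move: (iter _ F x) => y Fy.
  by apply: ker_sqr; rewrite -iterD -{1}(prednK k_gt0) addSn -addnS iterD Fy iter_fixed.
move=> m x le_km; rewrite -(subnK le_km); elim: (m - k)%N => [|j IH] //.
by rewrite addSn => /(step _ _ (leq_addl j k)); exact: IH.
Qed.

End IteratedKernels.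

Lemma iter_range_stable (U : Type) (T : U -> U) :
  (forall y, exists v, T y = T (T v)) -> forall j y, exists v, T y = iter j.+1 T v.
Proof.
move=> range_sqr; elim=> [|j IH] y; first by exists y.
have [v ->] := IH y; rewrite iterSr; have [w ->] := range_sqr v.
by exists w; rewrite !iterSr.
Qed.

Section AdjointKernels.
Variables (R : realType) (V : lmodType R[i]) (ip : V -> V -> R[i]).
Hypothesis hip : is_inner_product ip.

Lemma adjoint_map0 A B : is_adjoint ip A B -> B 0 = 0.
Proof. by move=> hAB; apply: (ipr_inj hip) => y; rewrite -hAB !(ip0r hip). Qed.

Lemma quasiposinormalP A B : is_adjoint ip A B ->
  quasiposinormal ip A <-> kernel A `<=` kernel B.
Proof.
move=> hAB; split=> [|kerAB B' hAB' x /kerAB]; first exact.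
by rewrite /kernel /= (adjoint_unique hip hAB hAB').
Qed.

Lemma coquasiposinormalP A B : is_adjoint ip A B ->
  coquasiposinormal ip A <-> kernel B `<=` kernel A.
Proof.
move=> hAB; split=> [|kerBA B' hAB' x]; first exact.
by rewrite /kernel /= -(adjoint_unique hip hAB hAB'); apply: kerBA.
Qed.

Lemma ker_sqr_of_ker_sub_adjoint A B : is_adjoint ip A B ->
  kernel A `<=` kernel B -> forall v, A (A v) = 0 -> A v = 0.
Proof.
move=> hAB kerAB v AAv; case: hip => _ _ _; apply.
by rewrite hAB kerAB // (ip0r hip).
Qed.

Lemma ker_iter_sub_adjoint T S k m : is_adjoint ip T S -> (0 < k)%N -> (k <= m)%N ->
  kernel (opow T k) `<=` kernel (opow S k) -> kernel (opow T m) `<=` kernel (opow S m).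
Proof.
move=> hTS k_gt0 le_km kerTS x; rewrite /kernel /opow /= => Tmx.
have ker_sqr := ker_sqr_of_ker_sub_adjoint (adjoint_iter hTS k) kerTS.
have Tkx := iter_ker_stable (adjoint_map0 (adjoint_sym hip hTS)) k_gt0 ker_sqr le_km Tmx.
have Skx : iter k S x = 0 := kerTS x Tkx.
by have := iter_ker_le (adjoint_map0 hTS) le_km Skx.
Qed.

Lemma ker_sub_adjoint_of_descent1 T S k : is_adjoint ip T S -> (0 < k)%N ->
    Defs.range (opow T 2) = Defs.range (opow T 1) ->
  kernel (opow T k) `<=` kernel (opow S k) -> kernel T `<=` kernel S.
Proof.
move=> hTS k_gt0 dsc1 kerTS x Tx; apply: (ipr_inj hip) => y; rewrite (ip0r hip) -hTS.
have range_sqr z : exists v, T z = T (T v).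
  have : Defs.range (opow T 2) (T z) by rewrite dsc1; exists z.
  by case=> v <-; exists v.
have [v ->] := iter_range_stable range_sqr k.-1 y; rewrite prednK //.
rewrite (adjoint_iter hTS) kerTS ?(ip0r hip) //.
have T1x : iter 1 T x = 0 := Tx.
by have := iter_ker_le (adjoint_map0 (adjoint_sym hip hTS)) k_gt0 T1x.
Qed.

End AdjointKernels.

Lemma ker_sub_of_ascent1 (R : realType) (V : lmodType R[i]) (T S : V -> V) l :
    S 0 = 0 -> (0 < l)%N -> kernel (opow T 1) = kernel (opow T 2) ->
  kernel (opow S l) `<=` kernel (opow T l) -> kernel S `<=` kernel T.
Proof.
move=> S0 l_gt0 asc1 kerST x Sx.
have ker_sqr v : T (T v) = 0 -> T v = 0.
  by move=> TTv; have : kernel (opow T 2) v := TTv; rewrite -asc1.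
have ker_iter j v : iter j.+1 T v = 0 -> T v = 0.
  by elim: j v => [|j IH] v //; rewrite iterSr => /IH /ker_sqr.
have S1x : iter 1 S x = 0 := Sx.
have Slx : iter l S x = 0 by have := iter_ker_le S0 l_gt0 S1x.
by apply: (ker_iter l.-1); rewrite prednK //; apply: kerST.
Qed.

Theorem theorem5p8 (R : realType) (V : lmodType R[i]) (ip : V -> V -> R[i])
  (hV : hilbert_space ip) (T : V -> V) (hT : bounded_linear ip T)
  (k l : nat) (hk : (0 < k)%N) (hl : (0 < l)%N)
  (hqk : quasiposinormal ip (opow T k))
  (hcl : coquasiposinormal ip (opow T l)) :
  (forall m : nat, (lcmn k l <= m)%N ->
     quasiposinormal ip (opow T m) /\ coquasiposinormal ip (opow T m)) /\
  (descent_is T 1 -> quasiposinormal ip T) /\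
  (ascent_is T 1 -> coquasiposinormal ip T).
Proof.
have hip := hV.1; have [S hS] := bounded_linear_adjoint hV hT.
have hSj := adjoint_iter hS.
have /(quasiposinormalP hip (hSj k)) kerTS := hqk.
have /(coquasiposinormalP hip (hSj l)) kerST := hcl.
split; [|split].
- move=> m le_lcm_m.
  have lcm_gt0 : (0 < lcmn k l)%N by rewrite lcmn_gt0 hk hl.
  have le_km := leq_trans (dvdn_leq lcm_gt0 (dvdn_lcml k l)) le_lcm_m.
  have le_lm := leq_trans (dvdn_leq lcm_gt0 (dvdn_lcmr k l)) le_lcm_m.
  split; [apply/(quasiposinormalP hip (hSj m)) | apply/(coquasiposinormalP hip (hSj m))].
    exact: ker_iter_sub_adjoint hS hk le_km kerTS.
  exact: ker_iter_sub_adjoint (adjoint_sym hip hS) hl le_lm kerST.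
- case=> dsc1 _; apply/(quasiposinormalP hip hS).
  exact: ker_sub_adjoint_of_descent1 hS hk dsc1 kerTS.
- case=> asc1 _; apply/(coquasiposinormalP hip hS).
  exact: ker_sub_of_ascent1 (adjoint_map0 hip hS) hl asc1 kerST.
Qed.
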